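(* Let $\gamma$ be a consistent family of grafts for a tree $\mathcal T$ and $\mathcal H=\mathrm{hybr}(\mathcal T,\gamma)$ (a tree). Then: (a) for each node $x$ of $\mathcal H$: $\mathrm{sons}_{\mathcal H}(x)=\mathrm{sons}_{\mathcal G}(x)$ if $x\in\{0_{\mathcal G}\}\cup\mathrm{impl}\,\mathcal G$ for some $\mathcal G\in\gamma$, and $\mathrm{sons}_{\mathcal H}(x)=\mathrm{sons}_{\mathcal T}(x)$ otherwise (i.e. when $x\in\mathrm{supp}(\mathcal T,\gamma)\setminus\{0_{\mathcal G}:\mathcal G\in\gamma\}$); (b) if $x\parallel_{\mathcal H}y$, then there are $x'\le_{\mathcal H}x$ and $y'\le_{\mathcal H}y$ such that either $x',y'\in\mathrm{supp}(\mathcal T,\gamma)$ and $x'\parallel_{\mathcal T}y'$, or for some $\mathcal G\in\gamma$, $x',y'\in\mathrm{nodes}\,\mathcal G$ and $x'\parallel_{\mathcal G}y'$; (c) if $\mathcal T$ has a least node, then $\mathcal H$ has a least node, $0_{\mathcal H}=0_{\mathcal T}$, and $0_{\mathcal H}\in\mathrm{supp}(\mathcal T,\gamma)$; (d) if $\max\mathcal T=\emptyset$ then $\max\mathcal H=\emptyset$; (e) if $\mathcal T$ and every $\mathcal G\in\gamma$ are $\kappa$-branching, then $\mathcal H$ is $\kappa$-branching; (f) if $\mathrm{height}\,\mathcal T\le\omega$ and $\mathrm{height}\,\mathcal G\le\omega$ for all $\mathcal G\in\gamma$, then $\mathrm{height}\,\mathcal H\le\omega$.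
   Context: A tree is a pair $\mathcal T=(Q,<_{\mathcal T})$ with $<_{\mathcal T}$ irreflexive transitive such that each set $\{v:v<_{\mathcal T}x\}$ is well-ordered; $x\parallel_{\mathcal T}y$ means $x,y$ incomparable; $\mathrm{sons}_{\mathcal T}(x)=\{s:x<_{\mathcal T}s$, no $v$ with $x<_{\mathcal T}v<_{\mathcal T}s\}$; $\max\mathcal T$ = maximal nodes; $0_{\mathcal T}$ = least node; $\kappa$-branching: every non-maximal node has exactly $\kappa$ sons; height of a node = order type of its predecessors, height of the tree = least $\beta$ such that no node has height $\beta$; $A{\downarrow}_{\mathcal T}=\{v:\exists a\in A\ a\le_{\mathcal T}v\}$; for an antichain $A$ and $x\in A{\downarrow}_{\mathcal T}$, $\mathrm{root}_{\mathcal T}(x,A)$ is the unique $r\in A$ with $r\le_{\mathcal T}x$. A graft for $\mathcal T$ is a tree $\mathcal G$ with more than one node, with a least node $0_{\mathcal G}\in\mathrm{nodes}\,\mathcal T$, such that $\max\mathcal G\subseteq\{v\in\mathrm{nodes}\,\mathcal T:v>_{\mathcal T}0_{\mathcal G}\}$, $\max\mathcal G$ is an antichain in $\mathcal T$, and $\mathrm{impl}\,\mathcal G:=\mathrm{nodes}\,\mathcal G\setminus(\{0_{\mathcal G}\}\cup\max\mathcal G)$ is disjoint from $\mathrm{nodes}\,\mathcal T$. $\mathrm{expl}(\mathcal T,\mathcal G)=\{v:v>_{\mathcal T}0_{\mathcal G}\}\setminus(\max\mathcal G){\downarrow}_{\mathcal T}$. $\gamma$ is a consistent family of grafts for $\mathcal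 T$ if its members are grafts for $\mathcal T$ with pairwise disjoint implants and for distinct $\mathcal D,\mathcal E\in\gamma$: $0_{\mathcal D}\parallel_{\mathcal T}0_{\mathcal E}$, or $0_{\mathcal D}\in(\max\mathcal E){\downarrow}_{\mathcal T}$, or $0_{\mathcal E}\in(\max\mathcal D){\downarrow}_{\mathcal T}$. $\mathrm{supp}(\mathcal T,\gamma)=\mathrm{nodes}\,\mathcal T\setminus\bigcup_{\mathcal G\in\gamma}\mathrm{expl}(\mathcal T,\mathcal G)$. $\mathrm{hybr}(\mathcal T,\gamma)=(H,<)$ with $H=\mathrm{supp}(\mathcal T,\gamma)\cup\bigcup_{\mathcal G\in\gamma}\mathrm{impl}\,\mathcal G$ and $x<y$ iff: (b1) $x,y\in\mathrm{supp}$, $x<_{\mathcal T}y$; or (b2) $x,y\in\mathrm{impl}\,\mathcal G$, $x<_{\mathcal G}y$ for some $\mathcal G\in\gamma$; or (b3) $x\in\mathrm{supp}$, $y\in\mathrm{impl}\,\mathcal G$, $x\le_{\mathcal T}0_{\mathcal G}$ for some $\mathcal G$; or (b4) $x\in\mathrm{impl}\,\mathcal G$, $y\in\mathrm{supp}\cap(\max\mathcal G){\downarrow}_{\mathcal T}$, $x<_{\mathcal G}\mathrm{root}_{\mathcal T}(y,\max\mathcal G)$ for some $\mathcal G$; or (b5) $x\in\mathrm{impl}\,\mathcal D$, $y\in\mathrm{impl}\,\mathcal E$, $0_{\mathcal E}\in(\max\mathcal D){\downarrow}_{\mathcal T}$, $x<_{\mathcal D}\mathrm{root}_{\mathcal T}(0_{\mathcal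 E},\max\mathcal D)$ for some distinct $\mathcal D,\mathcal E\in\gamma$. This $\mathrm{hybr}(\mathcal T,\gamma)$ is a tree. *)

From Stdlib Require Import List.

Set Implicit Arguments.

Record tree (U : Type) := Tree { nodes : U -> Prop; tlt : U -> U -> Prop }.
Arguments Tree {U}.
Arguments nodes {U}.
Arguments tlt {U}.

Section Trees.
Variable U : Type.
Implicit Types (T : tree U) (x y v s r m : U) (A : U -> Prop).

Definition tle T x y : Prop := x = y \/ tlt T x y.

Definition well_ordered_on (A : U -> Prop) (R : U -> U -> Prop) : Prop :=
  (forall a b, A a -> A b -> a = b \/ R a b \/ R b a) /\
  (forall S : U -> Prop, (forall s, S s -> A s) -> (exists s, S s) ->
     exists m, S m /\ forall s, S s -> s <> m -> R m s).

Definition is_tree T : Prop :=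
  (forall x y, tlt T x y -> nodes T x /\ nodes T y) /\
  (forall x, nodes T x -> ~ tlt T x x) /\
  (forall x y z, tlt T x y -> tlt T y z -> tlt T x z) /\
  (forall x, nodes T x -> well_ordered_on (fun v => tlt T v x) (tlt T)).

Definition incomp T x y : Prop :=
  nodes T x /\ nodes T y /\ ~ tle T x y /\ ~ tle T y x.

Definition sons T x s : Prop :=
  tlt T x s /\ ~ (exists v, tlt T x v /\ tlt T v s).

Definition maxnode T m : Prop := nodes T m /\ ~ (exists v, tlt T m v).

Definition is_least T r : Prop :=
  nodes T r /\ forall v, nodes T v -> v <> r -> tlt T r v.

Definition down T A v : Prop := nodes T v /\ exists a, A a /\ tle T a v.

Definition antichain T A : Prop :=
  (forall a, A a -> nodes T a) /\
  (forall a b, A a -> A b -> a <> b -> incomp T a b).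

Definition is_root T x A r : Prop := A r /\ tle T r x.

(* κ-branching, κ represented by a type K: every non-maximal node has
   exactly |K| sons (a bijection K -> sons). *)
Definition branching T (K : Type) : Prop :=
  forall x, nodes T x -> ~ maxnode T x ->
    exists f : K -> U, (forall k1 k2, f k1 = f k2 -> k1 = k2) /\
      (forall s, sons T x s <-> exists k, f k = s).

(* height T <= ω  iff  every node has finite height, i.e. finitely many
   predecessors *)
Definition height_le_omega T : Prop :=
  forall x, nodes T x -> exists l : list U, forall v, tlt T v x -> In v l.

End Trees.

(* Grafts carry their least node 0_G explicitly. *)
Record graft (U : Type) := Graft { gtree : tree U; gzero : U }.
Arguments Graft {U}.
Arguments gtree {U}.
Arguments gzero {U}.

Section Grafts.
Variable U : Type.
Implicit Types (T : tree U) (G D E : graft U) (x y v : U) (gamma : graft U -> Prop).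

Definition impl G v : Prop :=
  nodes (gtree G) v /\ v <> gzero G /\ ~ maxnode (gtree G) v.

Definition is_graft T G : Prop :=
  is_tree (gtree G) /\
  (exists a b, nodes (gtree G) a /\ nodes (gtree G) b /\ a <> b) /\
  is_least (gtree G) (gzero G) /\
  nodes T (gzero G) /\
  (forall m, maxnode (gtree G) m -> nodes T m /\ tlt T (gzero G) m) /\
  antichain T (maxnode (gtree G)) /\
  (forall v, impl G v -> ~ nodes T v).

Definition expl T G v : Prop :=
  nodes T v /\ tlt T (gzero G) v /\ ~ down T (maxnode (gtree G)) v.

Definition consistent T gamma : Prop :=
  (forall G, gamma G -> is_graft T G) /\
  (forall D E, gamma D -> gamma E -> D <> E -> forall v, impl D v -> ~ impl E v) /\
  (forall D E, gamma D -> gamma E -> D <> E ->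
     incomp T (gzero D) (gzero E) \/
     down T (maxnode (gtree E)) (gzero D) \/
     down T (maxnode (gtree D)) (gzero E)).

Definition supp T gamma v : Prop :=
  nodes T v /\ forall G, gamma G -> ~ expl T G v.

Definition hybr_nodes T gamma v : Prop :=
  supp T gamma v \/ exists G, gamma G /\ impl G v.

Definition hybr_lt T gamma x y : Prop :=
  (supp T gamma x /\ supp T gamma y /\ tlt T x y) \/
  (exists G, gamma G /\ impl G x /\ impl G y /\ tlt (gtree G) x y) \/
  (exists G, gamma G /\ supp T gamma x /\ impl G y /\ tle T x (gzero G)) \/
  (exists G, gamma G /\ impl G x /\ supp T gamma y /\
     down T (maxnode (gtree G)) y /\
     exists r, is_root T y (maxnode (gtree G)) r /\ tlt (gtree G) x r) \/
  (exists D E, gamma D /\ gamma E /\ D <> E /\ impl D x /\ impl E y /\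
     down T (maxnode (gtree D)) (gzero E) /\
     exists r, is_root T (gzero E) (maxnode (gtree D)) r /\ tlt (gtree D) x r).

Definition hybr T gamma : tree U := Tree (hybr_nodes T gamma) (hybr_lt T gamma).

End Grafts.

From Stdlib Require Import List Classical.
Set Implicit Arguments.

(* Every node of the hybrid hangs from a node of the support: a support node
   from itself, an implant of [E] from [0_E]. This shadow is monotone along the
   hybrid order, strictly so towards support nodes. Consequently, between a
   node [x] in [{0_G} ∪ impl G] and a node of [G] above it the hybrid sees only
   nodes of [G], while above any other support node [x] it sees the support
   of [T], since an explicit node of [E] above [x] forces [x <= 0_E]. *)

Lemma list_choice (A B : Type) (l : list A) (P : A -> list B -> Prop) :
  (forall a, In a l -> exists lb, P a lb) ->
  exists L, forall a, In a l -> exists lb, P a lb /\ incl lb L.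
Proof.
  induction l as [| a0 l IH]; intros Hex.
  - exists nil. intros a [].
  - destruct (Hex a0 (or_introl eq_refl)) as [lb Hlb].
    destruct (IH (fun a Ha => Hex a (or_intror Ha))) as [L HL].
    exists (lb ++ L). intros a [<- | Ha].
    + exists lb. split; [exact Hlb | apply incl_appl, incl_refl].
    + destruct (HL a Ha) as [lb' [Hp Hi]].
      exists lb'. split; [exact Hp | apply incl_appr; exact Hi].
Qed.

Section TreeOrder.
Variable U : Type.

Lemma sons_incl (T1 T2 : tree U) x :
  (forall s, sons T1 x s -> tlt T2 x s) ->
  (forall v s, tlt T2 x v -> tlt T2 v s -> tlt T1 x s ->
     exists w, tlt T1 x w /\ tlt T1 w s) ->
  forall s, sons T1 x s -> sons T2 x s.
Proof.
  intros Hlt Hgap s Hs. split; [exact (Hlt s Hs) |].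
  intros [v [Lxv Lvs]]. apply (proj2 Hs).
  exact (Hgap v s Lxv Lvs (proj1 Hs)).
Qed.

Lemma incomp_sym (T0 : tree U) x y : incomp T0 x y -> incomp T0 y x.
Proof. intros (Hx & Hy & Nxy & Nyx). repeat split; assumption. Qed.

Variable T : tree U.
Hypothesis hT : is_tree T.

Lemma tree_lt_nodes {x y} : tlt T x y -> nodes T x /\ nodes T y.
Proof. exact (proj1 hT x y). Qed.

Lemma tree_lt_irrefl {x} : ~ tlt T x x.
Proof.
  intros L. destruct hT as (_ & Hirr & _).
  exact (Hirr x (proj1 (tree_lt_nodes L)) L).
Qed.

Lemma tree_lt_trans {x y z} : tlt T x y -> tlt T y z -> tlt T x z.
Proof. destruct hT as (_ & _ & Htrans & _). apply Htrans. Qed.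

Lemma tree_lt_total {a b x} : tlt T a x -> tlt T b x -> a = b \/ tlt T a b \/ tlt T b a.
Proof.
  intros La Lb. destruct hT as (_ & _ & _ & Hwo).
  exact (proj1 (Hwo x (proj2 (tree_lt_nodes La))) a b La Lb).
Qed.

Lemma tree_le_total {a b x} : tle T a x -> tle T b x -> a = b \/ tlt T a b \/ tlt T b a.
Proof.
  intros [-> | La] [-> | Lb]; auto.
  exact (tree_lt_total La Lb).
Qed.

Lemma tree_le_lt_trans {a b c} : tle T a b -> tlt T b c -> tlt T a c.
Proof. intros [-> | L1] L2; [exact L2 | exact (tree_lt_trans L1 L2)]. Qed.

Lemma tree_lt_le_trans {a b c} : tlt T a b -> tle T b c -> tlt T a c.
Proof. intros L1 [<- | L2]; [exact L1 | exact (tree_lt_trans L1 L2)]. Qed.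

Lemma tree_le_trans {a b c} : tle T a b -> tle T b c -> tle T a c.
Proof. intros [-> | L1] L2; [exact L2 | right; exact (tree_lt_le_trans L1 L2)]. Qed.

Lemma tree_lt_le_false {a b} : tlt T a b -> tle T b a -> False.
Proof. intros L1 L2. exact (tree_lt_irrefl (tree_lt_le_trans L1 L2)). Qed.

Lemma tree_lt_asym {a b} : tlt T a b -> tlt T b a -> False.
Proof. intros L1 L2. exact (tree_lt_le_false L1 (or_intror L2)). Qed.

End TreeOrder.

Section Hybrid.
Variable U : Type.
Variable T : tree U.
Variable gamma : graft U -> Prop.
Hypothesis hT : is_tree T.
Hypothesis hg : consistent T gamma.
Implicit Types (G D E : graft U) (x y v w m r s t u : U).

Local Notation mx G := (maxnode (gtree G)).
Local Notation sp := (supp T gamma).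
Local Notation Hyb := (hybr T gamma).

Lemma graft_of {G} : gamma G -> is_graft T G.
Proof. exact (proj1 hg G). Qed.

Lemma graft_is_tree {G} : gamma G -> is_tree (gtree G).
Proof. intros HG. exact (proj1 (graft_of HG)). Qed.

Lemma graft_zero_node {G} : gamma G -> nodes (gtree G) (gzero G).
Proof. intros HG. destruct (graft_of HG) as (_ & _ & [Hz _] & _). exact Hz. Qed.

Lemma graft_zero_node_T {G} : gamma G -> nodes T (gzero G).
Proof. intros HG. destruct (graft_of HG) as (_ & _ & _ & Hz & _). exact Hz. Qed.

Lemma graft_zero_lt {G v} : gamma G -> nodes (gtree G) v -> v <> gzero G ->
  tlt (gtree G) (gzero G) v.
Proof. intros HG. destruct (graft_of HG) as (_ & _ & [_ Hl] & _). apply Hl. Qed.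

Lemma graft_max_above {G m} : gamma G -> mx G m -> nodes T m /\ tlt T (gzero G) m.
Proof. intros HG. destruct (graft_of HG) as (_ & _ & _ & _ & Hmax & _). apply Hmax. Qed.

Lemma graft_max_antichain {G m1 m2} : gamma G -> mx G m1 -> mx G m2 ->
  tle T m1 m2 -> m1 = m2.
Proof.
  intros HG H1 H2 Hle. destruct (graft_of HG) as (_ & _ & _ & _ & _ & [_ Hanti] & _).
  apply NNPP. intros Hne. exact (proj1 (proj2 (proj2 (Hanti m1 m2 H1 H2 Hne))) Hle).
Qed.

Lemma impl_not_node {G v} : gamma G -> impl G v -> ~ nodes T v.
Proof. intros HG. destruct (graft_of HG) as (_ & _ & _ & _ & _ & _ & Himpl). apply Himpl. Qed.

Lemma graft_has_nonzero {G} : gamma G -> exists w, nodes (gtree G) w /\ w <> gzero G.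
Proof.
  intros HG. destruct (graft_of HG) as (_ & (a & b & Ha & Hb & Hab) & _).
  destruct (classic (a = gzero G)) as [-> | Ha0]; eauto.
Qed.

Lemma graft_node_cases {G v} : nodes (gtree G) v -> v = gzero G \/ impl G v \/ mx G v.
Proof.
  intros Hv. unfold impl.
  destruct (classic (v = gzero G)); destruct (classic (mx G v)); tauto.
Qed.

Lemma max_no_succ {G m v} : mx G m -> ~ tlt (gtree G) m v.
Proof. intros [_ Hm] L. apply Hm. exists v. exact L. Qed.

Lemma graft_zero_not_max {G} : gamma G -> ~ mx G (gzero G).
Proof.
  intros HG Hm. destruct (graft_has_nonzero HG) as (w & Hw & Hw0).
  exact (max_no_succ Hm (graft_zero_lt HG Hw Hw0)).
Qed.

Lemma impl_zero_lt {G v} : gamma G -> impl G v -> tlt (gtree G) (gzero G) v.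
Proof. intros HG (Hv & Hv0 & _). exact (graft_zero_lt HG Hv Hv0). Qed.

Lemma max_zero_lt {G m} : gamma G -> mx G m -> tlt (gtree G) (gzero G) m.
Proof.
  intros HG Hm. apply (graft_zero_lt HG (proj1 Hm)).
  intros ->. exact (graft_zero_not_max HG Hm).
Qed.

Lemma root_self {G m} : mx G m -> is_root T m (mx G) m.
Proof. intros Hm. split; [exact Hm | left; reflexivity]. Qed.

Lemma root_unique {G y r1 r2} : gamma G ->
  is_root T y (mx G) r1 -> is_root T y (mx G) r2 -> r1 = r2.
Proof.
  intros HG [H1 L1] [H2 L2].
  destruct (tree_le_total hT L1 L2) as [e | [L | L]]; [exact e | |].
  - exact (graft_max_antichain HG H1 H2 (or_intror L)).
  - symmetry. exact (graft_max_antichain HG H2 H1 (or_intror L)).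
Qed.

Lemma root_zero_lt {G y r} : gamma G -> is_root T y (mx G) r -> tlt T (gzero G) r.
Proof. intros HG [Hr _]. exact (proj2 (graft_max_above HG Hr)). Qed.

Lemma no_root_at_zero {G r} : gamma G -> ~ is_root T (gzero G) (mx G) r.
Proof. intros HG Hr. exact (tree_lt_le_false hT (root_zero_lt HG Hr) (proj2 Hr)). Qed.

Lemma grafts_related {D E} : gamma D -> gamma E -> D <> E ->
  incomp T (gzero D) (gzero E) \/ down T (mx E) (gzero D) \/ down T (mx D) (gzero E).
Proof. intros HD HE Hne. exact (proj2 (proj2 hg) D E HD HE Hne). Qed.

Lemma impl_graft_unique {D E v} : gamma D -> gamma E -> impl D v -> impl E v -> D = E.
Proof.
  intros HD HE HvD HvE. apply NNPP. intros Hne.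
  exact (proj1 (proj2 hg) D E HD HE Hne v HvD HvE).
Qed.

Lemma graft_zero_inj {D E} : gamma D -> gamma E -> gzero D = gzero E -> D = E.
Proof.
  intros HD HE Hz. apply NNPP. intros Hne.
  destruct (grafts_related HD HE Hne) as [(_ & _ & N & _) | [[_ [a [Ha Hle]]] | [_ [a [Ha Hle]]]]].
  - apply N. left. exact Hz.
  - rewrite Hz in Hle. exact (tree_lt_le_false hT (proj2 (graft_max_above HE Ha)) Hle).
  - rewrite <- Hz in Hle. exact (tree_lt_le_false hT (proj2 (graft_max_above HD Ha)) Hle).
Qed.

Lemma supp_node {v} : sp v -> nodes T v.
Proof. intros [Hv _]. exact Hv. Qed.

Lemma supp_not_impl {G v} : gamma G -> sp v -> ~ impl G v.
Proof. intros HG Hv Hi. exact (impl_not_node HG Hi (supp_node Hv)). Qed.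

Lemma zero_supp {G} : gamma G -> sp (gzero G).
Proof.
  intros HG. split; [exact (graft_zero_node_T HG) |].
  intros D HD (_ & L & Hnd).
  destruct (classic (D = G)) as [-> | Hne]; [exact (tree_lt_irrefl hT L) |].
  destruct (grafts_related HD HG Hne) as [(_ & _ & N & _) | [[_ [a [Ha Hle]]] | Hdown]].
  - apply N. right. exact L.
  - exact (tree_lt_asym hT (tree_lt_le_trans hT (proj2 (graft_max_above HG Ha)) Hle) L).
  - exact (Hnd Hdown).
Qed.

Lemma max_supp {G m} : gamma G -> mx G m -> sp m.
Proof.
  intros HG Hm. destruct (graft_max_above HG Hm) as [Hmn L0m].
  split; [exact Hmn |]. intros D HD (_ & L & Hnd). apply Hnd.
  split; [exact Hmn |].
  destruct (classic (D = G)) as [-> | Hne]; [exists m; exact (root_self Hm) |].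
  destruct (grafts_related HD HG Hne) as [(_ & _ & N1 & N2) | [[_ [a [Ha Hle]]] | [_ [a [Ha Hle]]]]].
  - exfalso. destruct (tree_lt_total hT L L0m) as [e | [L' | L']].
    + apply N1. left. exact e.
    + apply N1. right. exact L'.
    + apply N2. right. exact L'.
  - exfalso. pose proof (tree_le_lt_trans hT Hle L) as Lam.
    rewrite (graft_max_antichain HG Ha Hm (or_intror Lam)) in Hle.
    exact (tree_lt_le_false hT L Hle).
  - exists a. split; [exact Ha | right; exact (tree_le_lt_trans hT Hle L0m)].
Qed.

Lemma supp_above_zero_root {G y} : gamma G -> sp y -> tlt T (gzero G) y ->
  exists r, is_root T y (mx G) r.
Proof.
  intros HG [Hy Hs] L. apply NNPP. intros Hno.
  apply (Hs G HG). split; [exact Hy |]. split; [exact L |].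
  intros [_ [a Ha]]. apply Hno. exists a. exact Ha.
Qed.

Lemma not_supp_expl {v} : nodes T v -> ~ sp v -> exists G, gamma G /\ expl T G v.
Proof.
  intros Hv Hns. apply NNPP. intros Hno. apply Hns.
  split; [exact Hv |]. intros G HG He. apply Hno. exists G. split; assumption.
Qed.

Lemma expl_le_zero {G x v} : gamma G -> sp x -> tlt T x v -> expl T G v ->
  tle T x (gzero G).
Proof.
  intros HG Hx Lxv (Hv & L0v & Hnd).
  destruct (tree_lt_total hT Lxv L0v) as [e | [L | L]]; [left; exact e | right; exact L |].
  exfalso. destruct (supp_above_zero_root HG Hx L) as [r Hr]. apply Hnd.
  split; [exact Hv | exists r; split; [exact (proj1 Hr) | right; exact (tree_le_lt_trans hT (proj2 Hr) Lxv)]].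
Qed.

Lemma hybr_nodes_cases {v} : nodes Hyb v -> sp v \/ exists G, gamma G /\ impl G v.
Proof. intros Hv. exact Hv. Qed.

Lemma hybr_lt_nodes {x y} : tlt Hyb x y -> nodes Hyb x /\ nodes Hyb y.
Proof.
  cbn [tlt nodes hybr]. unfold hybr_lt, hybr_nodes.
  intros [(H1 & H2 & _) | [(G & HG & H1 & H2 & _) | [(G & HG & H1 & H2 & _) |
    [(G & HG & H1 & H2 & _) | (D & E & HD & HE & _ & H1 & H2 & _)]]]];
  split; solve [left; exact H1 | left; exact H2 | right; eauto].
Qed.

Ltac supp_impl_absurd :=
  exfalso; match goal with
  | HG : gamma ?G, Hs : supp T gamma ?v, Hi : impl ?G ?v |- _ => exact (supp_not_impl HG Hs Hi)
  end.

Lemma hybr_lt_supp_supp {x y} : sp x -> sp y -> (tlt Hyb x y <-> tlt T x y).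
Proof.
  intros Hx Hy. split; [| intros L; left; auto].
  cbn [tlt hybr]. unfold hybr_lt.
  intros [(_ & _ & L) | [(G & HG & H1 & _) | [(G & HG & _ & H1 & _) |
    [(G & HG & H1 & _) | (D & E & HD & HE & _ & H1 & _)]]]]; [exact L | supp_impl_absurd ..].
Qed.

Lemma hybr_lt_supp_impl {G x y} : gamma G -> sp x -> impl G y ->
  (tlt Hyb x y <-> tle T x (gzero G)).
Proof.
  intros HG Hx Hy. split; [| intros Hle; right; right; left; exists G; auto].
  cbn [tlt hybr]. unfold hybr_lt.
  intros [(_ & H1 & _) | [(G' & HG' & H1 & _) | [(G' & HG' & _ & H1 & Hle) |
    [(G' & HG' & H1 & _) | (D & E & HD & HE & _ & H1 & _)]]]]; try supp_impl_absurd.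
  rewrite (impl_graft_unique HG HG' Hy H1). exact Hle.
Qed.

Lemma hybr_lt_impl_supp {G x y} : gamma G -> impl G x -> sp y ->
  (tlt Hyb x y <-> exists r, is_root T y (mx G) r /\ tlt (gtree G) x r).
Proof.
  intros HG Hx Hy. split.
  - cbn [tlt hybr]. unfold hybr_lt.
    intros [(H1 & _) | [(G' & HG' & _ & H1 & _) | [(G' & HG' & H1 & _) |
      [(G' & HG' & H1 & _ & _ & Hr) | (D & E & HD & HE & _ & _ & H1 & _)]]]]; try supp_impl_absurd.
    rewrite (impl_graft_unique HG HG' Hx H1). exact Hr.
  - intros [r [Hr Lxr]]. right; right; right; left. exists G.
    split; [exact HG |]. split; [exact Hx |]. split; [exact Hy |].
    split; [split; [exact (supp_node Hy) | exists r; exact Hr] | exists r; split; assumption].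
Qed.

Lemma hybr_lt_impl_impl {G x y} : gamma G -> impl G x -> impl G y ->
  (tlt Hyb x y <-> tlt (gtree G) x y).
Proof.
  intros HG Hx Hy. split; [| intros L; right; left; exists G; auto].
  cbn [tlt hybr]. unfold hybr_lt.
  intros [(H1 & _) | [(G' & HG' & H1 & _ & L) | [(G' & HG' & H1 & _) |
    [(G' & HG' & _ & H1 & _) | (D & E & HD & HE & Hne & H1 & H2 & _)]]]]; try supp_impl_absurd.
  - rewrite (impl_graft_unique HG HG' Hx H1). exact L.
  - exfalso. apply Hne.
    rewrite <- (impl_graft_unique HG HD Hx H1). exact (impl_graft_unique HG HE Hy H2).
Qed.

Lemma hybr_lt_impl_impl_neq {D E x y} : gamma D -> gamma E -> D <> E -> impl D x -> impl E y ->
  (tlt Hyb x y <-> exists r, is_root T (gzero E) (mx D) r /\ tlt (gtree D) x r).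
Proof.
  intros HD HE Hne Hx Hy. split.
  - cbn [tlt hybr]. unfold hybr_lt.
    intros [(H1 & _) | [(G' & HG' & H1 & H2 & _) | [(G' & HG' & H1 & _) |
      [(G' & HG' & _ & H1 & _) | (D' & E' & HD' & HE' & _ & H1 & H2 & _ & Hr)]]]];
      try supp_impl_absurd.
    + exfalso. apply Hne.
      rewrite (impl_graft_unique HD HG' Hx H1). exact (impl_graft_unique HG' HE H2 Hy).
    + rewrite (impl_graft_unique HD HD' Hx H1), (impl_graft_unique HE HE' Hy H2). exact Hr.
  - intros [r [Hr Lxr]]. right; right; right; right. exists D, E.
    do 5 (split; [assumption |]).
    split; [split; [exact (graft_zero_node_T HE) | exists r; exact Hr] | exists r; split; assumption].
Qed.

Definition shadow v t : Prop :=
  (sp v /\ t = v) \/ (exists E, gamma E /\ impl E v /\ t = gzero E).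

Lemma shadow_exists {v} : nodes Hyb v -> exists t, shadow v t.
Proof.
  intros [Hv | (E & HE & Hv)].
  - exists v. left. split; [exact Hv | reflexivity].
  - exists (gzero E). right. exists E. auto.
Qed.

Lemma shadow_of_supp {v} : sp v -> shadow v v.
Proof. intros Hv. left. split; [exact Hv | reflexivity]. Qed.

Lemma shadow_of_impl {E v} : gamma E -> impl E v -> shadow v (gzero E).
Proof. intros HE Hv. right. exists E. auto. Qed.

Lemma shadow_supp_eq {v t} : sp v -> shadow v t -> t = v.
Proof. intros Hv [[_ e] | (E & HE & Hi & _)]; [exact e | supp_impl_absurd]. Qed.

Lemma shadow_impl_eq {E v t} : gamma E -> impl E v -> shadow v t -> t = gzero E.
Proof.
  intros HE Hv [[Hs _] | (E' & HE' & Hv' & ->)]; [supp_impl_absurd |].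
  rewrite (impl_graft_unique HE' HE Hv' Hv). reflexivity.
Qed.

Lemma shadow_supp {v t} : shadow v t -> sp t.
Proof. intros [[Hv ->] | (E & HE & _ & ->)]; [exact Hv | exact (zero_supp HE)]. Qed.

Lemma supp_le_shadow_hybr {r s t} : sp r -> tle T r t -> shadow s t -> tle Hyb r s.
Proof.
  intros Hr Hle [[Hs ->] | (E & HE & Hs & ->)].
  - destruct Hle as [e | L]; [left; exact e | right; exact (proj2 (hybr_lt_supp_supp Hr Hs) L)].
  - right. exact (proj2 (hybr_lt_supp_impl HE Hr Hs) Hle).
Qed.

Lemma hybr_lt_shadow {v w t u} : tlt Hyb v w -> shadow v t -> shadow w u ->
  tle T t u /\ (sp w -> tlt T t u).
Proof.
  intros Lvw Ht Hu. cbn [tlt hybr] in Lvw. unfold hybr_lt in Lvw.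
  destruct Lvw as [(Hv & Hw & L) | [(G & HG & Hv & Hw & _) | [(G & HG & Hv & Hw & Hle) |
    [(G & HG & Hv & Hw & _ & r & Hr & _) | (D & E & HD & HE & _ & Hv & Hw & _ & r & Hr & _)]]]].
  - rewrite (shadow_supp_eq Hv Ht), (shadow_supp_eq Hw Hu).
    split; [right; exact L | intros _; exact L].
  - rewrite (shadow_impl_eq HG Hv Ht), (shadow_impl_eq HG Hw Hu).
    split; [left; reflexivity | intros Hs; supp_impl_absurd].
  - rewrite (shadow_supp_eq Hv Ht), (shadow_impl_eq HG Hw Hu).
    split; [exact Hle | intros Hs; supp_impl_absurd].
  - rewrite (shadow_impl_eq HG Hv Ht), (shadow_supp_eq Hw Hu).
    pose proof (tree_lt_le_trans hT (root_zero_lt HG Hr) (proj2 Hr)) as L.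
    split; [right; exact L | intros _; exact L].
  - rewrite (shadow_impl_eq HD Hv Ht), (shadow_impl_eq HE Hw Hu).
    pose proof (tree_lt_le_trans hT (root_zero_lt HD Hr) (proj2 Hr)) as L.
    split; [right; exact L | intros _; exact L].
Qed.

Lemma hybr_lt_impl_shadow {G x y t} : gamma G -> impl G x -> shadow y t -> ~ impl G y ->
  (tlt Hyb x y <-> exists r, is_root T t (mx G) r /\ tlt (gtree G) x r).
Proof.
  intros HG Hx [[Hy ->] | (E & HE & Hy & ->)] Hny.
  - exact (hybr_lt_impl_supp HG Hx Hy).
  - apply (hybr_lt_impl_impl_neq HG HE); [| exact Hx | exact Hy].
    intros <-. exact (Hny Hy).
Qed.

Definition graft_inner G x : Prop := x = gzero G \/ impl G x.

Lemma graft_inner_node {G x} : gamma G -> graft_inner G x ->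
  nodes (gtree G) x /\ ~ mx G x.
Proof.
  intros HG [-> | (Hx & _ & Hnm)]; [| split; assumption].
  split; [exact (graft_zero_node HG) | exact (graft_zero_not_max HG)].
Qed.

Lemma graft_above_inner {G x g} : gamma G -> graft_inner G x -> tlt (gtree G) x g ->
  impl G g \/ mx G g.
Proof.
  intros HG Hx Lxg. pose proof (graft_is_tree HG) as hG.
  destruct (graft_node_cases (proj2 (tree_lt_nodes hG Lxg))) as [-> | Hg]; [exfalso | exact Hg].
  destruct Hx as [-> | Hx]; [exact (tree_lt_irrefl hG Lxg) |].
  exact (tree_lt_asym hG (impl_zero_lt HG Hx) Lxg).
Qed.

Lemma hybr_lt_of_graft_lt {G x g} : gamma G -> graft_inner G x -> tlt (gtree G) x g ->
  tlt Hyb x g.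
Proof.
  intros HG Hx Lxg.
  destruct (graft_above_inner HG Hx Lxg) as [Hg | Hg]; destruct Hx as [-> | Hx].
  - apply (proj2 (hybr_lt_supp_impl HG (zero_supp HG) Hg)). left. reflexivity.
  - exact (proj2 (hybr_lt_impl_impl HG Hx Hg) Lxg).
  - apply (proj2 (hybr_lt_supp_supp (zero_supp HG) (max_supp HG Hg))).
    exact (proj2 (graft_max_above HG Hg)).
  - apply (proj2 (hybr_lt_impl_supp HG Hx (max_supp HG Hg))).
    exists g. split; [exact (root_self Hg) | exact Lxg].
Qed.

Lemma graft_lt_of_hybr_lt {G x s} : gamma G -> graft_inner G x -> impl G s \/ mx G s ->
  tlt Hyb x s -> tlt (gtree G) x s.
Proof.
  intros HG Hx Hs Lxs. destruct Hx as [-> | Hx]; destruct Hs as [Hs | Hs].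
  - exact (impl_zero_lt HG Hs).
  - exact (max_zero_lt HG Hs).
  - exact (proj1 (hybr_lt_impl_impl HG Hx Hs) Lxs).
  - destruct (proj1 (hybr_lt_impl_supp HG Hx (max_supp HG Hs)) Lxs) as [r [Hr Lxr]].
    rewrite (root_unique HG Hr (root_self Hs)) in Lxr. exact Lxr.
Qed.

Lemma hybr_lt_graft_root {G x s t} : gamma G -> graft_inner G x -> tlt Hyb x s ->
  shadow s t -> ~ impl G s -> exists r, is_root T t (mx G) r /\ tlt (gtree G) x r.
Proof.
  intros HG [-> | Hx] Lxs Ht Hns; [| exact (proj1 (hybr_lt_impl_shadow HG Hx Ht Hns) Lxs)].
  assert (L0t : tlt T (gzero G) t).
  { destruct (hybr_lt_shadow Lxs (shadow_of_supp (zero_supp HG)) Ht) as [Hle Hlt].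
    destruct Ht as [[Hs ->] | (E & HE & Hs & ->)]; [exact (Hlt Hs) |].
    destruct Hle as [e | L]; [exfalso | exact L].
    apply Hns. rewrite (graft_zero_inj HG HE e). exact Hs. }
  destruct (supp_above_zero_root HG (shadow_supp Ht) L0t) as [r Hr].
  exists r. split; [exact Hr | exact (max_zero_lt HG (proj1 Hr))].
Qed.

Lemma graft_lt_of_hybr_son {G x s} : gamma G -> graft_inner G x -> sons Hyb x s ->
  tlt (gtree G) x s.
Proof.
  intros HG Hx [Lxs Hgap].
  destruct (classic (impl G s)) as [Hs | Hns];
    [exact (graft_lt_of_hybr_lt HG Hx (or_introl Hs) Lxs) |].
  destruct (shadow_exists (proj2 (hybr_lt_nodes Lxs))) as [t Ht].
  destruct (hybr_lt_graft_root HG Hx Lxs Ht Hns) as [r [Hr Lxr]].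
  destruct (supp_le_shadow_hybr (max_supp HG (proj1 Hr)) (proj2 Hr) Ht) as [<- | Lrs];
    [exact Lxr |].
  exfalso. apply Hgap. exists r. split; [exact (hybr_lt_of_graft_lt HG Hx Lxr) | exact Lrs].
Qed.

(* Between an inner node [x] of [G] and a node [s] of [G] above it, the
   hybrid order only sees nodes of [G]: a node hanging off a maximal node [r]
   of [G] has its shadow above [r], and shadows only increase. *)
Lemma graft_gap_of_hybr_gap {G x v s} : gamma G -> graft_inner G x ->
  tlt Hyb x v -> tlt Hyb v s -> tlt (gtree G) x s ->
  exists w, tlt (gtree G) x w /\ tlt (gtree G) w s.
Proof.
  intros HG Hx Lxv Lvs Lxs.
  pose proof (graft_above_inner HG Hx Lxs) as Hs.
  destruct (classic (impl G v)) as [Hv | Hnv].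
  { exists v. split; [exact (graft_lt_of_hybr_lt HG Hx (or_introl Hv) Lxv) |].
    exact (graft_lt_of_hybr_lt HG (or_intror Hv) Hs Lvs). }
  exfalso.
  destruct (shadow_exists (proj1 (hybr_lt_nodes Lvs))) as [t Ht].
  destruct (hybr_lt_graft_root HG Hx Lxv Ht Hnv) as [r [Hr _]].
  destruct Hs as [Hs | Hs].
  - destruct (hybr_lt_shadow Lvs Ht (shadow_of_impl HG Hs)) as [Hle _].
    exact (tree_lt_le_false hT (root_zero_lt HG Hr) (tree_le_trans hT (proj2 Hr) Hle)).
  - pose proof (max_supp HG Hs) as Hss.
    pose proof (proj2 (hybr_lt_shadow Lvs Ht (shadow_of_supp Hss)) Hss) as Lts.
    pose proof (tree_le_lt_trans hT (proj2 Hr) Lts) as Lrs.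
    rewrite (graft_max_antichain HG (proj1 Hr) Hs (or_intror Lrs)) in Hr.
    exact (tree_lt_le_false hT Lts (proj2 Hr)).
Qed.

Lemma sons_hybr_graft {G x s} : gamma G -> graft_inner G x ->
  (sons Hyb x s <-> sons (gtree G) x s).
Proof.
  intros HG Hx. split; apply sons_incl.
  - intros s' Hs'. exact (graft_lt_of_hybr_son HG Hx Hs').
  - intros v s' Lxv Lvs _. exists v. split; [exact (hybr_lt_of_graft_lt HG Hx Lxv) |].
    destruct (graft_above_inner HG Hx Lxv) as [Hv | Hv]; [| exfalso; exact (max_no_succ Hv Lvs)].
    exact (hybr_lt_of_graft_lt HG (or_intror Hv) Lvs).
  - intros s' [Lxs _]. exact (hybr_lt_of_graft_lt HG Hx Lxs).
  - intros v s' Lxv Lvs Lxs. exact (graft_gap_of_hybr_gap HG Hx Lxv Lvs Lxs).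
Qed.

Lemma hybr_node_T_supp {v} : nodes Hyb v -> nodes T v -> sp v.
Proof. intros [Hv | (G & HG & Hv)] Hn; [exact Hv | exfalso; exact (impl_not_node HG Hv Hn)]. Qed.

Lemma supp_lt_shadow {x v t} : sp x -> (forall G, gamma G -> x <> gzero G) ->
  tlt Hyb x v -> shadow v t -> tlt T x t.
Proof.
  intros Hx Hz Lxv Ht.
  destruct (hybr_lt_shadow Lxv (shadow_of_supp Hx) Ht) as [Hle Hlt].
  destruct Ht as [[Hv ->] | (E & HE & Hv & ->)]; [exact (Hlt Hv) |].
  destruct Hle as [e | L]; [exfalso; exact (Hz E HE e) | exact L].
Qed.

Lemma supp_lt_not_supp {x v} : sp x -> (forall G, gamma G -> x <> gzero G) ->
  tlt T x v -> ~ sp v -> exists G, gamma G /\ tlt T x (gzero G) /\ tlt T (gzero G) v.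
Proof.
  intros Hx Hz Lxv Hnv.
  destruct (not_supp_expl (proj2 (tree_lt_nodes hT Lxv)) Hnv) as (G & HG & Hexpl).
  destruct (expl_le_zero HG Hx Lxv Hexpl) as [e | Lx0]; [exfalso; exact (Hz G HG e) |].
  exists G. split; [exact HG | split; [exact Lx0 | exact (proj1 (proj2 Hexpl))]].
Qed.

Lemma sons_hybr_supp {x s} : sp x -> (forall G, gamma G -> x <> gzero G) ->
  (sons Hyb x s <-> sons T x s).
Proof.
  intros Hx Hz. split; apply sons_incl.
  - intros s' [Lxs Hgap].
    destruct (shadow_exists (proj2 (hybr_lt_nodes Lxs))) as [t Ht].
    pose proof (supp_lt_shadow Hx Hz Lxs Ht) as Lxt.
    destruct (supp_le_shadow_hybr (shadow_supp Ht) (or_introl eq_refl) Ht) as [<- | Lts];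
      [exact Lxt |].
    exfalso. apply Hgap. exists t.
    split; [exact (proj2 (hybr_lt_supp_supp Hx (shadow_supp Ht)) Lxt) | exact Lts].
  - intros v s' Lxv Lvs Lxs.
    pose proof (hybr_node_T_supp (proj2 (hybr_lt_nodes Lxs)) (proj2 (tree_lt_nodes hT Lvs))) as Hs.
    destruct (classic (sp v)) as [Hv | Hnv].
    + exists v. split; [exact (proj2 (hybr_lt_supp_supp Hx Hv) Lxv) |].
      exact (proj2 (hybr_lt_supp_supp Hv Hs) Lvs).
    + destruct (supp_lt_not_supp Hx Hz Lxv Hnv) as (G & HG & Lx0 & L0v).
      exists (gzero G). split; [exact (proj2 (hybr_lt_supp_supp Hx (zero_supp HG)) Lx0) |].
      exact (proj2 (hybr_lt_supp_supp (zero_supp HG) Hs) (tree_lt_trans hT L0v Lvs)).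
  - intros s' [Lxs Hgap].
    destruct (classic (sp s')) as [Hs | Hns]; [exact (proj2 (hybr_lt_supp_supp Hx Hs) Lxs) |].
    destruct (supp_lt_not_supp Hx Hz Lxs Hns) as (G & HG & Lx0 & L0s).
    exfalso. apply Hgap. exists (gzero G). split; assumption.
  - intros v s' Lxv Lvs Lxs.
    destruct (shadow_exists (proj1 (hybr_lt_nodes Lvs))) as [t Ht].
    pose proof (hybr_node_T_supp (proj2 (hybr_lt_nodes Lvs)) (proj2 (tree_lt_nodes hT Lxs))) as Hs.
    exists t. split; [exact (supp_lt_shadow Hx Hz Lxv Ht) |].
    exact (proj2 (hybr_lt_shadow Lvs Ht (shadow_of_supp Hs)) Hs).
Qed.

Definition incomp_witness x y : Prop :=
  exists x' y', tle Hyb x' x /\ tle Hyb y' y /\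
    ((sp x' /\ sp y' /\ incomp T x' y') \/
     (exists G, gamma G /\ nodes (gtree G) x' /\ nodes (gtree G) y' /\
                incomp (gtree G) x' y')).

Lemma incomp_witness_sym {x y} : incomp_witness y x -> incomp_witness x y.
Proof.
  intros (y' & x' & Hy & Hx & Hw). exists x', y'. split; [exact Hx | split; [exact Hy |]].
  destruct Hw as [(Hys & Hxs & Hi) | (G & HG & Hyn & Hxn & Hi)].
  - left. split; [exact Hxs | split; [exact Hys | exact (incomp_sym Hi)]].
  - right. exists G. split; [exact HG | split; [exact Hxn | split; [exact Hyn | exact (incomp_sym Hi)]]].
Qed.

Lemma incomp_witness_root {G x y t r} : gamma G -> impl G x -> shadow y t ->
  is_root T t (mx G) r -> ~ tlt Hyb x y -> incomp_witness x y.
Proof.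
  intros HG Hx Ht Hr Nxy.
  assert (Hny : ~ impl G y).
  { intros Hy. rewrite (shadow_impl_eq HG Hy Ht) in Hr. exact (no_root_at_zero HG Hr). }
  assert (Nxr : ~ tlt (gtree G) x r).
  { intros Lxr. apply Nxy. apply (proj2 (hybr_lt_impl_shadow HG Hx Ht Hny)). eauto. }
  destruct Hx as (Hxn & _ & Hxm). destruct Hr as [Hrm Hrt].
  exists x, r. split; [left; reflexivity |].
  split; [exact (supp_le_shadow_hybr (max_supp HG Hrm) Hrt Ht) |].
  right. exists G. split; [exact HG | split; [exact Hxn | split; [exact (proj1 Hrm) |]]].
  split; [exact Hxn | split; [exact (proj1 Hrm) | split]].
  - intros [-> | L]; [exact (Hxm Hrm) | exact (Nxr L)].
  - intros [-> | L]; [exact (Hxm Hrm) | exact (max_no_succ Hrm L)].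
Qed.

Lemma incomp_witness_same_graft {G x y} : gamma G -> impl G x -> impl G y ->
  ~ tle Hyb x y -> ~ tle Hyb y x -> incomp_witness x y.
Proof.
  intros HG Hx Hy Nxy Nyx.
  exists x, y. split; [left; reflexivity | split; [left; reflexivity |]].
  right. exists G. split; [exact HG | split; [exact (proj1 Hx) | split; [exact (proj1 Hy) |]]].
  split; [exact (proj1 Hx) | split; [exact (proj1 Hy) | split]].
  - intros [e | L]; apply Nxy; [left; exact e | right; exact (proj2 (hybr_lt_impl_impl HG Hx Hy) L)].
  - intros [e | L]; apply Nyx; [left; exact e | right; exact (proj2 (hybr_lt_impl_impl HG Hy Hx) L)].
Qed.

Lemma incomp_witness_of_shadow_le {x y tx ty} :
  ~ tle Hyb x y -> ~ tle Hyb y x -> shadow x tx -> shadow y ty -> tle T tx ty ->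
  incomp_witness x y.
Proof.
  intros Nxy Nyx Htx Hty Hle.
  destruct Htx as [[Hx ->] | (E & HE & Hx & ->)];
    [exfalso; exact (Nxy (supp_le_shadow_hybr Hx Hle Hty)) |].
  destruct (classic (impl E y)) as [Hy | Hny];
    [exact (incomp_witness_same_graft HE Hx Hy Nxy Nyx) |].
  destruct (classic (exists r, is_root T ty (mx E) r)) as [[r Hr] | Hnr].
  { apply (incomp_witness_root HE Hx Hty Hr). intros L. exact (Nxy (or_intror L)). }
  exfalso. destruct Hty as [[Hy ->] | (F & HF & Hy & ->)].
  - destruct Hle as [<- | L].
    + apply Nyx. right. apply (proj2 (hybr_lt_supp_impl HE Hy Hx)). left. reflexivity.
    + exact (Hnr (supp_above_zero_root HE Hy L)).
  - destruct Hle as [e | L].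
    + apply Hny. rewrite (graft_zero_inj HE HF e). exact Hy.
    + exact (Hnr (supp_above_zero_root HE (zero_supp HF) L)).
Qed.

(* Either the shadows are already incomparable in [T], or, after ordering
   them, the lower node is an implant and the witness sits in its graft. *)
Lemma hybr_incomp_witness {x y} : incomp Hyb x y -> incomp_witness x y.
Proof.
  intros (Hxn & Hyn & Nxy & Nyx).
  destruct (shadow_exists Hxn) as [tx Htx]. destruct (shadow_exists Hyn) as [ty Hty].
  destruct (classic (incomp T tx ty)) as [Hi | Hc].
  - exists tx, ty.
    split; [exact (supp_le_shadow_hybr (shadow_supp Htx) (or_introl eq_refl) Htx) |].
    split; [exact (supp_le_shadow_hybr (shadow_supp Hty) (or_introl eq_refl) Hty) |].
    left. split; [exact (shadow_supp Htx) | split; [exact (shadow_supp Hty) | exact Hi]].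
  - destruct (classic (tle T tx ty)) as [Hle | Nle];
      [exact (incomp_witness_of_shadow_le Nxy Nyx Htx Hty Hle) |].
    apply incomp_witness_sym. apply (incomp_witness_of_shadow_le Nyx Nxy Hty Htx).
    apply NNPP. intros Nle'. apply Hc.
    split; [exact (supp_node (shadow_supp Htx)) | split; [exact (supp_node (shadow_supp Hty)) |]].
    split; assumption.
Qed.

Lemma hybr_least {r} : is_least T r -> is_least Hyb r /\ sp r.
Proof.
  intros [Hrn Hleast].
  assert (Hrs : sp r).
  { split; [exact Hrn |]. intros G HG (_ & L0r & _).
    destruct (classic (gzero G = r)) as [<- | Hne]; [exact (tree_lt_irrefl hT L0r) |].
    exact (tree_lt_asym hT L0r (Hleast _ (graft_zero_node_T HG) Hne)). }
  split; [| exact Hrs]. split; [left; exact Hrs |].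
  intros v Hv Hne. destruct (hybr_nodes_cases Hv) as [Hvs | (E & HE & Hvi)].
  - exact (proj2 (hybr_lt_supp_supp Hrs Hvs) (Hleast v (supp_node Hvs) Hne)).
  - apply (proj2 (hybr_lt_supp_impl HE Hrs Hvi)).
    destruct (classic (gzero E = r)) as [<- | Hne0]; [left; reflexivity |].
    right. exact (Hleast _ (graft_zero_node_T HE) Hne0).
Qed.

Lemma supp_below_zero_succ {G m} : gamma G -> sp m -> tle T m (gzero G) ->
  exists w, tlt Hyb m w.
Proof.
  intros HG Hm Hle. destruct (graft_has_nonzero HG) as (w & Hw & Hw0). exists w.
  destruct (graft_node_cases Hw) as [e | [Hwi | Hwm]]; [contradiction | |].
  - exact (proj2 (hybr_lt_supp_impl HG Hm Hwi) Hle).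
  - apply (proj2 (hybr_lt_supp_supp Hm (max_supp HG Hwm))).
    exact (tree_le_lt_trans hT Hle (proj2 (graft_max_above HG Hwm))).
Qed.

Lemma hybr_no_max : (forall m, ~ maxnode T m) -> forall m, ~ maxnode Hyb m.
Proof.
  intros Hno m [Hm Hmax]. apply Hmax.
  destruct (hybr_nodes_cases Hm) as [Hms | (G & HG & Hmi)].
  - destruct (classic (exists v, tlt T m v)) as [[v Lmv] | Hn];
      [| exfalso; exact (Hno m (conj (supp_node Hms) Hn))].
    destruct (classic (sp v)) as [Hv | Hnv];
      [exists v; exact (proj2 (hybr_lt_supp_supp Hms Hv) Lmv) |].
    destruct (not_supp_expl (proj2 (tree_lt_nodes hT Lmv)) Hnv) as (G & HG & Hexpl).
    exact (supp_below_zero_succ HG Hms (expl_le_zero HG Hms Lmv Hexpl)).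
  - destruct (classic (exists v, tlt (gtree G) m v)) as [[v Lmv] | Hn];
      [| exfalso; apply (proj2 (proj2 Hmi)); split; [exact (proj1 Hmi) | exact Hn]].
    exists v. exact (hybr_lt_of_graft_lt HG (or_intror Hmi) Lmv).
Qed.

Lemma hybr_branching (K : Type) : branching T K ->
  (forall G, gamma G -> branching (gtree G) K) -> branching Hyb K.
Proof.
  intros bT bG x Hx Hnm.
  destruct (classic (exists G, gamma G /\ graft_inner G x)) as [(G & HG & Hin) | Hno].
  - destruct (graft_inner_node HG Hin) as [Hxn Hxm].
    destruct (bG G HG x Hxn Hxm) as [f [Hinj Hsurj]].
    exists f. split; [exact Hinj |]. intros s. rewrite (sons_hybr_graft HG Hin). apply Hsurj.
  - assert (Hz : forall G, gamma G -> x <> gzero G).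
    { intros G HG e. apply Hno. exists G. split; [exact HG | left; exact e]. }
    assert (Hxs : sp x).
    { destruct (hybr_nodes_cases Hx) as [Hxs | (G & HG & Hi)]; [exact Hxs |].
      exfalso. apply Hno. exists G. split; [exact HG | right; exact Hi]. }
    assert (Hxm : ~ maxnode T x).
    { intros [_ Hmax]. apply Hnm. split; [exact Hx |]. intros [v Lxv].
      destruct (shadow_exists (proj2 (hybr_lt_nodes Lxv))) as [t Ht].
      apply Hmax. exists t. exact (supp_lt_shadow Hxs Hz Lxv Ht). }
    destruct (bT x (supp_node Hxs) Hxm) as [f [Hinj Hsurj]].
    exists f. split; [exact Hinj |]. intros s. rewrite (sons_hybr_supp Hxs Hz). apply Hsurj.
Qed.

(* Only finitely many graft zeros lie below [y], and each graft contributes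
   the finitely many predecessors of the unique root of [y] in it. *)
Lemma graft_preds_below_roots {y} : height_le_omega T ->
  (forall G, gamma G -> height_le_omega (gtree G)) -> nodes T y ->
  exists L, forall D v r, gamma D -> is_root T y (mx D) r -> tlt (gtree D) v r -> In v L.
Proof.
  intros hTh hGh Hy. destruct (hTh y Hy) as [lT HlT].
  destruct (list_choice lT (fun a lb => forall D r v, gamma D -> gzero D = a ->
      is_root T y (mx D) r -> tlt (gtree D) v r -> In v lb)) as [L HL].
  - intros a _.
    destruct (classic (exists D r, gamma D /\ gzero D = a /\ is_root T y (mx D) r))
      as [(D & r & HD & Ha & Hr) | Hno].
    + destruct (hGh D HD r (proj1 (proj1 Hr))) as [lb Hlb]. exists lb.
      intros D' r' v HD' Ha' Hr' Lvr.
      assert (D' = D) as -> by (apply (graft_zero_inj HD' HD); congruence).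
      rewrite (root_unique HD Hr' Hr) in Lvr. exact (Hlb v Lvr).
    + exists nil. intros D' r' v HD' Ha' Hr'. exfalso. apply Hno. eauto.
  - exists L. intros D v r HD Hr Lvr.
    pose proof (HlT _ (tree_lt_le_trans hT (root_zero_lt HD Hr) (proj2 Hr))) as Hin.
    destruct (HL _ Hin) as [lb [Hp Hi]]. apply Hi. exact (Hp D r v HD eq_refl Hr Lvr).
Qed.

Lemma impl_preds_finite {x} : (forall G, gamma G -> height_le_omega (gtree G)) ->
  nodes Hyb x -> exists lG, forall E v, gamma E -> impl E x -> tlt (gtree E) v x -> In v lG.
Proof.
  intros hGh Hx. destruct (hybr_nodes_cases Hx) as [Hxs | (G & HG & Hxi)].
  - exists nil. intros E v HE Hxi. exfalso. exact (supp_not_impl HE Hxs Hxi).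
  - destruct (hGh G HG x (proj1 Hxi)) as [lG HlG]. exists lG.
    intros E v HE HxE Lvx. rewrite (impl_graft_unique HE HG HxE Hxi) in Lvx. exact (HlG v Lvx).
Qed.

Lemma hybr_height_le_omega : height_le_omega T ->
  (forall G, gamma G -> height_le_omega (gtree G)) -> height_le_omega Hyb.
Proof.
  intros hTh hGh x Hx.
  destruct (shadow_exists Hx) as [u Hu]. pose proof (supp_node (shadow_supp Hu)) as Hun.
  destruct (hTh u Hun) as [lT HlT].
  destruct (graft_preds_below_roots hTh hGh Hun) as [L HL].
  destruct (impl_preds_finite hGh Hx) as [lG HlG].
  exists ((u :: lT) ++ lG ++ L). intros v Lvx. apply in_or_app.
  destruct (hybr_nodes_cases (proj1 (hybr_lt_nodes Lvx))) as [Hvs | (E & HE & Hvi)].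
  - left. destruct (proj1 (hybr_lt_shadow Lvx (shadow_of_supp Hvs) Hu)) as [e | L'].
    + left. symmetry. exact e.
    + right. exact (HlT v L').
  - right. apply in_or_app. destruct (classic (impl E x)) as [Hxi | Hnx].
    + left. exact (HlG E v HE Hxi (proj1 (hybr_lt_impl_impl HE Hvi Hxi) Lvx)).
    + right. destruct (proj1 (hybr_lt_impl_shadow HE Hvi Hu Hnx) Lvx) as [r [Hr Lvr]].
      exact (HL E v r HE Hr Lvr).
Qed.

End Hybrid.

Theorem mainTheorem8 (U : Type) (T : tree U) (gamma : graft U -> Prop)
  (hT : is_tree T) (hg : consistent T gamma) :
  let H := hybr T gamma in
  (* (a) *)
  (forall x, nodes H x ->
     (forall G, gamma G -> (x = gzero G \/ impl G x) ->
        forall s, sons H x s <-> sons (gtree G) x s) /\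
     ((forall G, gamma G -> x <> gzero G /\ ~ impl G x) ->
        forall s, sons H x s <-> sons T x s)) /\
  (* (b) *)
  (forall x y, incomp H x y ->
     exists x' y', tle H x' x /\ tle H y' y /\
       ((supp T gamma x' /\ supp T gamma y' /\ incomp T x' y') \/
        (exists G, gamma G /\ nodes (gtree G) x' /\ nodes (gtree G) y' /\
                   incomp (gtree G) x' y'))) /\
  (* (c) *)
  ((exists r, is_least T r) ->
     exists r, is_least H r /\ is_least T r /\ supp T gamma r) /\
  (* (d) *)
  ((forall m, ~ maxnode T m) -> forall m, ~ maxnode H m) /\
  (* (e) *)
  (forall K : Type, branching T K -> (forall G, gamma G -> branching (gtree G) K) ->
     branching H K) /\
  (* (f) *)
  (height_le_omega T -> (forall G, gamma G -> height_le_omega (gtree G)) ->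
     height_le_omega H).
Proof.
  intros H. split; [| split; [| split; [| split; [| split]]]].
  - intros x Hx. split.
    + intros G HG Hin s. exact (sons_hybr_graft hT hg HG Hin).
    + intros Hnot s. destruct (hybr_nodes_cases Hx) as [Hxs | (G & HG & Hi)].
      * exact (sons_hybr_supp hT hg Hxs (fun G HG => proj1 (Hnot G HG))).
      * exfalso. exact (proj2 (Hnot G HG) Hi).
  - intros x y Hi. exact (hybr_incomp_witness hT hg Hi).
  - intros [r Hr]. exists r. destruct (hybr_least hT hg Hr) as [Hl Hs]. auto.
  - exact (hybr_no_max hT hg).
  - intros K bT bG. exact (hybr_branching hT hg bT bG).
  - intros hTh hGh. exact (hybr_height_le_omega hT hg hTh hGh).
Qed.
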